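(* Let $G$ be a $(2K_2, C_4)$-free graph on $n$ vertices and let $\ell \ge \chi(G)+1$ be an integer. Then $\mathcal{R}_\ell(G)$ is connected and has diameter at most $4n$.
   Context: All graphs are finite and simple. A $k$-colouring of $G$ is a map $\alpha: V(G)\to\{1,\dots,k\}$ with $\alpha(u)\neq\alpha(v)$ for every edge $uv$; $\chi(G)$ is the chromatic number. The reconfiguration graph $\mathcal{R}_k(G)$ has the $k$-colourings of $G$ as vertices, two being adjacent if they differ on exactly one vertex. A graph is $(H_1,H_2)$-free if it has no induced subgraph isomorphic to $H_1$ or $H_2$; $2K_2$ is the disjoint union of two edges and $C_4$ is the 4-cycle. *)

From mathcomp Require Import all_boot.
Set Implicit Arguments. Unset Strict Implicit. Unset Printing Implicit Defensive.

Definition simple_graph (V : finType) (e : rel V) : Prop :=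
  symmetric e /\ irreflexive e.

Definition has_induced (W : finType) (h : rel W) (V : finType) (e : rel V) : Prop :=
  exists f : W -> V, injective f /\ forall x y, e (f x) (f y) = h x y.

Definition two_K2 : rel 'I_4 := fun x y =>
  [|| (val x == 0) && (val y == 1), (val x == 1) && (val y == 0),
      (val x == 2) && (val y == 3) | (val x == 3) && (val y == 2)].

Definition C4 : rel 'I_4 := fun x y =>
  ((val x + 1) %% 4 == val y) || ((val y + 1) %% 4 == val x).

Definition proper_col (V : finType) (e : rel V) (k : nat) (f : {ffun V -> 'I_k}) : bool :=
  [forall x, forall y, e x y ==> (f x != f y)].

Definition colorable (V : finType) (e : rel V) (k : nat) : Prop :=
  exists f : {ffun V -> 'I_k}, proper_col e f.

Definition is_chromatic_number (V : finType) (e : rel V) (k : nat) : Prop :=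
  colorable e k /\ forall j, colorable e j -> k <= j.

Definition recol_adj (V : finType) (k : nat) : rel {ffun V -> 'I_k} :=
  fun f g => #|[set v | f v != g v]| == 1.

Definition recol_walk (V : finType) (e : rel V) (k : nat)
  (a : {ffun V -> 'I_k}) (s : seq {ffun V -> 'I_k}) : bool :=
  path (@recol_adj V k) a s && all (@proper_col V e k) (a :: s).

Definition recol_dist_le (V : finType) (e : rel V) (k : nat)
  (a b : {ffun V -> 'I_k}) (d : nat) : Prop :=
  exists s, [/\ recol_walk e a s, last a s = b & size s <= d].

Definition recol_connected (V : finType) (e : rel V) (k : nat) : Prop :=
  forall a b : {ffun V -> 'I_k}, proper_col e a -> proper_col e b ->
    exists s, recol_walk e a s /\ last a s = b.

Definition recol_diam_le (V : finType) (e : rel V) (k d : nat) : Prop :=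
  forall a b : {ffun V -> 'I_k}, proper_col e a -> proper_col e b ->
    recol_dist_le e a b d.

From mathcomp Require Import all_boot zify ssralg zmodp.
From Stdlib Require Import Classical.
Set Implicit Arguments. Unset Strict Implicit. Unset Printing Implicit Defensive.
Import GRing.Theory.

(* A (2K2, C4)-free graph either contains an induced C5, and is then a clique K
   complete to the cycle plus an independent set anticomplete to it, or it is a
   split graph: a maximum clique K with fewest edges outside it has an independent
   complement.  In both cases a retraction rho onto a set R (K, or K plus three
   vertices of the cycle) has independent fibres, and |R| < l because the
   chromatic number is at least |K|, resp. |K| + 3.  Colourings c o rho with c
   injective on R are joined by recolouring whole fibres, each at most twice (a
   fibre is parked on a free colour only when no fibre can move straight to its
   target), at cost at most 2n; every colouring reaches such a colouring in at
   most n steps, recolouring an independent set one vertex at a time.  Hence the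
   diameter is at most n + 2n + n = 4n. *)

Lemma leq_cardsU (T : finType) (A B : {set T}) : #|A :|: B| <= #|A| + #|B|.
Proof. by rewrite cardsU leq_subr. Qed.

Lemma cards3_le (T : finType) (x y z : T) : #|[set x; y; z]| <= 3.
Proof. by rewrite !cardsU !cards1; lia. Qed.

Lemma in_inj_setU1 (T rT : finType) (g : T -> rT) x (A : {set T}) :
  {in A &, injective g} -> g x \notin g @: A -> {in x |: A &, injective g}.
Proof.
move=> ginj gx u v; rewrite !inE => /predU1P[-> | uA] /predU1P[-> | vA] // E.
- by rewrite E imset_f in gx.
- by rewrite -E imset_f in gx.
- exact: ginj.
Qed.

Lemma exists_fresh_colour l (X : {set 'I_l}) : #|X| < l -> exists col, col \notin X.
Proof.
move=> Xl; apply/existsP; rewrite -negb_forall; apply: contraTN Xl => /forallP allX.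
by rewrite -leqNgt -{1}(card_ord l) -cardsT subset_leq_card //; apply/subsetP => x.
Qed.

Definition independent (V : finType) (e : rel V) (S : {set V}) :=
  {in S &, forall x y, ~~ e x y}.

Definition clique (V : finType) (e : rel V) (K : {set V}) :=
  {in K &, forall x y, x != y -> e x y}.

Definition cliqueb (V : finType) (e : rel V) (K : {set V}) :=
  [forall x in K, forall y in K, (x != y) ==> e x y].

Lemma cliqueP (V : finType) (e : rel V) (K : {set V}) : reflect (clique e K) (cliqueb e K).
Proof.
apply: (iffP forallP) => [H x y xK yK xy | H x].
  by move/implyP/(_ xK)/forallP/(_ y)/implyP/(_ yK)/implyP/(_ xy): (H x).
by apply/implyP => xK; apply/forallP => y; apply/implyP => yK; apply/implyP/H.
Qed.

(** * Walks in the reconfiguration graph *)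

Section Recolouring.
Variables (V : finType) (e : rel V) (l : nat).
Hypotheses (esym : symmetric e) (eirr : irreflexive e).
Implicit Types (a b : {ffun V -> 'I_l}) (S : {set V}).

Lemma proper_colP a : reflect (forall x y, e x y -> a x != a y) (proper_col e a).
Proof.
apply: (iffP forallP) => [H x y | H x]; first by move/forallP/(_ y)/implyP: (H x).
by apply/forallP => y; apply/implyP/H.
Qed.

Lemma proper_col_neq a x y : proper_col e a -> e x y -> a x != a y.
Proof. by move/proper_colP; apply. Qed.

Lemma proper_clique_inj a K : proper_col e a -> clique e K -> {in K &, injective a}.
Proof.
move=> pa Kcl x y xK yK axy; apply/eqP/negPn/negP => xy.
by move: (proper_col_neq pa (Kcl x y xK yK xy)); rewrite axy eqxx.
Qed.

Lemma recol_dist_le_refl a : proper_col e a -> recol_dist_le e a a 0.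
Proof. by move=> pa; exists [::]; rewrite /recol_walk /= pa. Qed.

Lemma recol_dist_le_properr a b n : recol_dist_le e a b n -> proper_col e b.
Proof. by case=> s [/andP[_ /allP qs] <- _]; apply: qs; apply: mem_last. Qed.

Lemma recol_dist_le_widen a b m n :
  m <= n -> recol_dist_le e a b m -> recol_dist_le e a b n.
Proof. by move=> mn [s [w sb sm]]; exists s; split; last exact: leq_trans mn. Qed.

Lemma recol_dist_le_trans a b c m n :
  recol_dist_le e a b m -> recol_dist_le e b c n -> recol_dist_le e a c (m + n).
Proof.
case=> s [/andP[ps qs] sb sm] [t [/andP[pt /andP[_ qt]] tc tn]].
exists (s ++ t); split; last by rewrite size_cat leq_add.
- by rewrite /recol_walk cat_path ps sb pt -cat_cons all_cat qs.
- by rewrite last_cat sb.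
Qed.

Lemma recol_adj_sym : symmetric (@recol_adj V l).
Proof.
by move=> a b; rewrite /recol_adj; congr (_ == _); apply: eq_card => v; rewrite !inE eq_sym.
Qed.

Lemma recol_dist_le_sym a b n : recol_dist_le e a b n -> recol_dist_le e b a n.
Proof.
case=> s [/andP[ps qs] sb sn]; exists (rev (belast a s)); split.
- rewrite /recol_walk -sb rev_path -(eq_path recol_adj_sym) ps.
  apply/allP => x; rewrite inE mem_rev => /predU1P[-> | /mem_belast xs].
    by move/allP: qs; apply; apply: mem_last.
  by move/allP: qs; apply.
- rewrite -sb; case/lastP: s {ps qs sn sb} => // s y.
  by rewrite last_rcons belast_rcons rev_cons last_rcons.
- by rewrite size_rev size_belast.
Qed.

Lemma recol_dist_le1 a b x :
  proper_col e a -> proper_col e b -> (forall v, v != x -> a v = b v) -> recol_dist_le e a b 1.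
Proof.
move=> pa pb ab; have [<- | nab] := eqVneq a b; first exact/recol_dist_le_widen/recol_dist_le_refl.
exists [:: b]; split => //; rewrite /recol_walk /= pa pb /recol_adj !andbT.
suff -> : [set v | a v != b v] = [set x] by rewrite cards1.
apply/setP => v; rewrite !inE; have [-> | vx] := eqVneq v x.
  by apply: contra nab => /eqP abx; apply/eqP/ffunP => w; have [-> | /ab] := eqVneq w x.
by rewrite ab ?eqxx.
Qed.

(* Recolouring an independent set vertex by vertex: when a vertex of [S] takes
   its final colour, all its neighbours lie outside [S] and already agree. *)
Lemma recol_dist_le_indep a b S : proper_col e a -> proper_col e b ->
  independent e S -> {in ~: S, a =1 b} -> recol_dist_le e a b #|S|.
Proof.
have [n] := ubnP #|S|; elim: n S a => // n IH S a ltSn pa pb indS ab.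
have [S0 | [x xS]] := set_0Vmem S.
  have -> : a = b by apply/ffunP => v; apply: ab; rewrite S0 !inE.
  by rewrite S0 cards0; apply: recol_dist_le_refl.
pose a1 := [ffun v => if v == x then b x else a v].
have nbr_out v : e x v -> v \notin S.
  by apply: contraL => vS; apply: indS.
have pa1 : proper_col e a1.
  apply/proper_colP => u v; rewrite !ffunE.
  have [-> | ux] := eqVneq u x; have [-> | vx] := eqVneq v x; rewrite ?eirr // => euv.
  - by rewrite ab ?inE ?nbr_out //; apply: (proper_col_neq pb).
  - by rewrite ab ?inE ?nbr_out 1?esym //; apply: (proper_col_neq pb).
  - exact: (proper_col_neq pa).
rewrite (cardsD1 x S) xS.
apply: recol_dist_le_trans (IH _ _ _ pa1 pb _ _).
- by apply: (recol_dist_le1 (x := x)) => // v /negbTE vx; rewrite ffunE vx.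
- by move: ltSn; rewrite (cardsD1 x S) xS.
- by move=> u v /setD1P[_ uS] /setD1P[_ vS]; apply: indS.
- move=> v; rewrite !inE ffunE negb_and negbK.
  by have [-> // | _ /= vS] := eqVneq v x; apply: ab; rewrite inE.
Qed.

Definition recolour a S col : {ffun V -> 'I_l} := [ffun v => if v \in S then col else a v].

Lemma proper_recolour a S col : proper_col e a -> independent e S ->
  (forall u v, u \in S -> v \notin S -> e u v -> a v != col) ->
  proper_col e (recolour a S col).
Proof.
move=> pa indS col_ok; apply/proper_colP => u v euv; rewrite !ffunE.
case: ifP => uS; case: ifP => vS.
- by have := indS u v uS vS; rewrite euv.
- by rewrite eq_sym (col_ok u) ?vS.
- by rewrite (col_ok v) ?uS // esym.
- exact: (proper_col_neq pa).
Qed.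

Lemma recol_dist_le_recolour a S col : proper_col e a -> independent e S ->
  (forall u v, u \in S -> v \notin S -> e u v -> a v != col) ->
  recol_dist_le e a (recolour a S col) #|S|.
Proof.
move=> pa indS col_ok; apply: recol_dist_le_indep; rewrite ?proper_recolour //.
by move=> v; rewrite inE ffunE => /negbTE ->.
Qed.

Lemma recol_diam_le_connected n : recol_diam_le e l n -> recol_connected e l.
Proof. by move=> diam a b pa pb; have [s [walk_s last_s _]] := diam a b pa pb; exists s. Qed.

End Recolouring.

Arguments proper_colP {V e l a}.

(** * Colourings factoring through a retraction *)

Section Retraction.
Variables (V : finType) (e : rel V) (l : nat).
Hypotheses (esym : symmetric e) (eirr : irreflexive e).
Variables (R : {set V}) (rho : V -> V).
Hypothesis rho_in : forall v, rho v \in R.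
Hypothesis rho_id : {in R, forall r, rho r = r}.
Hypothesis rho_indep : forall u v, rho u = rho v -> ~~ e u v.
Hypothesis R_lt : #|R| < l.

Definition retract_col (c : V -> 'I_l) : {ffun V -> 'I_l} := [ffun v => c (rho v)].

Notation fibre r := [set v | rho v == r].

Definition update (c : V -> 'I_l) r col := fun v => if v == r then col else c v.

Lemma proper_retract_col c : {in R &, injective c} -> proper_col e (retract_col c).
Proof.
move=> cinj; apply/proper_colP => u v; rewrite !ffunE; apply: contraTneq => /cinj eq_rho.
exact/rho_indep/eq_rho.
Qed.

Lemma update_inj c r col : {in R &, injective c} -> col \notin c @: R ->
  {in R &, injective (update c r col)}.
Proof.
move=> cinj fresh u v uR vR; rewrite /update.
case: eqP => [-> | _]; case: eqP => [-> | _] // E; last exact: cinj.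
- by rewrite E imset_f in fresh.
- by rewrite -E imset_f in fresh.
Qed.

Lemma retract_col_update c r col : {in R &, injective c} -> col \notin c @: R ->
  recol_dist_le e (retract_col c) (retract_col (update c r col)) #|fibre r|.
Proof.
move=> cinj fresh.
apply: recol_dist_le_indep; rewrite ?proper_retract_col //; first exact: update_inj.
- by move=> u v; rewrite !inE => /eqP ur /eqP vr; apply: rho_indep; rewrite ur vr.
- by move=> v; rewrite !inE !ffunE /update => /negbTE ->.
Qed.

Lemma sum_fibres : \sum_(r in R) #|fibre r| = #|V|.
Proof.
rewrite -[#|V|]sum1_card [RHS](partition_big rho (mem R)) //=.
by apply: eq_bigr => r _; rewrite -sum1_card; apply: eq_bigl => v; rewrite inE.
Qed.

Section ToTarget.
Variable d : V -> 'I_l.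
Hypothesis dinj : {in R &, injective d}.

(* The moves the fibre of [r] may still need: one more when its current colour
   is the target of some fibre, as it may first have to be parked elsewhere. *)
Definition pending (c : V -> 'I_l) r : nat :=
  (c r != d r) + ((c r != d r) && (c r \in d @: R)).

Definition potential c := \sum_(r in R) pending c r * #|fibre r|.

Lemma potential_le c : potential c <= 2 * #|V|.
Proof.
rewrite -sum_fibres big_distrr leq_sum // => r _.
by rewrite leq_mul2r /pending; case: (c r != d r); case: (_ \in _); rewrite orbT.
Qed.

Lemma potential_update c r col : r \in R -> pending (update c r col) r < pending c r ->
  potential (update c r col) + #|fibre r| <= potential c.
Proof.
move=> rR lt_pending; rewrite /potential (bigD1 r rR) [X in _ <= X](bigD1 r rR) /=.
have -> : \sum_(v in R | v != r) pending (update c r col) v * #|fibre v| =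
          \sum_(v in R | v != r) pending c v * #|fibre v|.
  by apply: eq_bigr => v /andP[_ /negbTE vr]; rewrite /pending /update vr.
by rewrite addnAC leq_add2r -mulSnr leq_mul2r lt_pending orbT.
Qed.

Lemma retract_col_dist c : {in R &, injective c} ->
  recol_dist_le e (retract_col c) (retract_col d) (potential c).
Proof.
have [n] := ubnP (potential c); elim: n c => // n IH c lt_n cinj.
have step r col : r \in R -> col \notin c @: R -> pending (update c r col) r < pending c r ->
    recol_dist_le e (retract_col c) (retract_col d) (potential c).
  move=> rR fresh lt_pending; have dec := potential_update rR lt_pending.
  have fibre_gt0 : 0 < #|fibre r| by apply/card_gt0P; exists r; rewrite inE rho_id.
  have c_c' := retract_col_update r cinj fresh.
  have lt_n' : potential (update c r col) < n by lia.
  have c'_d := IH _ lt_n' (update_inj (r := r) cinj fresh).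
  by apply: recol_dist_le_widen (recol_dist_le_trans c_c' c'_d); lia.
case: (pickP [pred r in R | (c r != d r) && (d r \notin c @: R)]) => [r | no_free].
  case/and3P=> rR neq fresh; apply: (step r (d r)) => //.
  by rewrite /pending /update eqxx eqxx /= neq.
case: (pickP [pred r in R | c r != d r]) => [r /andP[rR neq] | agree]; last first.
  have -> : retract_col c = retract_col d.
    by apply/ffunP => v; rewrite !ffunE; apply/eqP/negbFE; rewrite -(agree (rho v)) /= rho_in.
  exact/recol_dist_le_widen/recol_dist_le_refl/proper_retract_col.
have same_im : d @: R = c @: R.
  apply/eqP; rewrite eqEcard !card_in_imset // leqnn andbT.
  apply/subsetP => _ /imsetP[r' r'R ->]; move: (no_free r'); rewrite /= r'R.
  by case: eqVneq => [<- _ | _ /negbFE //]; apply: imset_f.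
have [col fresh] := exists_fresh_colour (leq_ltn_trans (leq_imset_card c R) R_lt).
apply: (step r col) => //; rewrite /pending /update eqxx neq same_im imset_f //=.
by rewrite (negbTE fresh) andbF addn0; case: eqVneq.
Qed.

End ToTarget.

Lemma recol_diam_le_retraction :
  (forall a, proper_col e a ->
     exists2 c, {in R &, injective c} & recol_dist_le e a (retract_col c) #|V|) ->
  recol_diam_le e l (4 * #|V|).
Proof.
move=> to_retract a b pa pb.
have [ca cainj a_ca] := to_retract a pa; have [cb cbinj b_cb] := to_retract b pb.
have ca_cb := recol_dist_le_widen (potential_le cb ca) (retract_col_dist cbinj cainj).
have := recol_dist_le_trans (recol_dist_le_trans a_ca ca_cb) (recol_dist_le_sym b_cb).
by apply: recol_dist_le_widen; lia.
Qed.

End Retraction.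

(** * Split graphs and blown-up 5-cycles *)

Section SplitGraph.
Variables (V : finType) (e : rel V) (l : nat).
Hypotheses (esym : symmetric e) (eirr : irreflexive e).
Variable K : {set V}.
Hypotheses (K_clique : clique e K) (out_indep : independent e (~: K)).
Hypothesis out_nonadj : forall v, v \notin K -> exists2 k, k \in K & ~~ e v k.
Hypothesis K_lt : #|K| < l.

Definition split_rho v := if v \in K then v else odflt v [pick k in K | ~~ e v k].

Lemma split_rho_out v : v \notin K -> split_rho v \in K /\ ~~ e v (split_rho v).
Proof.
move=> vK; rewrite /split_rho (negbTE vK); case: pickP => [k /andP[] // | none].
by have [k kK nvk] := out_nonadj vK; move: (none k); rewrite /= kK nvk.
Qed.

Lemma split_rho_in v : split_rho v \in K.
Proof. by case: (boolP (v \in K)) => vK; [rewrite /split_rho vK | case: (split_rho_out vK)]. Qed.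

Lemma split_rho_id : {in K, forall k, split_rho k = k}.
Proof. by move=> k kK; rewrite /split_rho kK. Qed.

Lemma split_rho_indep u v : split_rho u = split_rho v -> ~~ e u v.
Proof.
case: (boolP (u \in K)) => uK; case: (boolP (v \in K)) => vK.
- by rewrite !split_rho_id // => ->; rewrite eirr.
- by rewrite (split_rho_id uK) => ->; rewrite esym; case: (split_rho_out vK).
- by rewrite (split_rho_id vK) => <-; case: (split_rho_out uK).
- by move=> _; apply: out_indep; rewrite inE.
Qed.

Lemma split_recol_diam : recol_diam_le e l (4 * #|V|).
Proof.
apply: (recol_diam_le_retraction esym eirr split_rho_in split_rho_id split_rho_indep K_lt).
move=> a pa; have aK := proper_clique_inj pa K_clique.
exists a => //; apply: (recol_dist_le_widen (max_card (mem (~: K)))).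
apply: recol_dist_le_indep => //; first exact: (proper_retract_col split_rho_in split_rho_indep aK).
by move=> v; rewrite !inE negbK ffunE => /split_rho_id ->.
Qed.

End SplitGraph.

(* The 5-cycle on Z/5Z, so that rotations i |-> k + i are automorphisms. *)
Definition c5rel (i j : 'I_5) : bool := (j == i + 1)%R || (i == j + 1)%R.

Lemma c5rel_sym : symmetric c5rel.
Proof. by move=> i j; rewrite /c5rel orbC. Qed.

Lemma c5rel_addl k i j : c5rel (k + i)%R (k + j)%R = c5rel i j.
Proof. by rewrite /c5rel -!addrA !(inj_eq (addrI k)). Qed.

Lemma I5_ind (P : 'I_5 -> Prop) :
  P 0%R -> P 1%R -> P 2%R -> P 3%R -> P 4%R -> forall i, P i.
Proof.
move=> P0 P1 P2 P3 P4 [[|[|[|[|[|m]]]]] lt] //.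
- by rewrite (_ : Ordinal lt = 0%R) //; apply: val_inj.
- by rewrite (_ : Ordinal lt = 1%R) //; apply: val_inj.
- by rewrite (_ : Ordinal lt = 2%R) //; apply: val_inj.
- by rewrite (_ : Ordinal lt = 3%R) //; apply: val_inj.
- by rewrite (_ : Ordinal lt = 4%R) //; apply: val_inj.
Qed.

(* Folds the cycle onto the path 4 - 0 - 1. *)
Definition c5_fold (i : 'I_5) : 'I_5 :=
  if i == 2%R then 0%R else if i == 3%R then 1%R else i.

Lemma c5_fold_indep i j : c5_fold i = c5_fold j -> ~~ c5rel i j.
Proof. by elim/I5_ind: i; elim/I5_ind: j. Qed.

Section C5Blowup.
Variables (V : finType) (e : rel V) (l : nat).
Hypotheses (esym : symmetric e) (eirr : irreflexive e).
Variables (K : {set V}) (f : 'I_5 -> V).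
Hypotheses (finj : injective f) (f_C5 : forall i j, e (f i) (f j) = c5rel i j).
Hypotheses (K_clique : clique e K) (K_complete : forall k i, k \in K -> e k (f i)).

Lemma C5_colour_notin_K k (a : {ffun V -> 'I_k}) i : proper_col e a -> a (f i) \notin a @: K.
Proof.
move=> pa; apply/imsetP => -[x xK E].
by move: (proper_col_neq pa (K_complete i xK)); rewrite E eqxx.
Qed.

Definition C5_rest := [set v | (v \notin K) && (v \notin codom f)].

Hypothesis rest_anticomplete : forall u i, u \in C5_rest -> ~~ e u (f i).
Hypothesis rest_indep : independent e C5_rest.
Hypothesis K_lt : #|K| + 3 < l.

Lemma C5_notin_K i : f i \notin K.
Proof. by apply/negP => fiK; move: (K_complete i fiK); rewrite eirr. Qed.

Lemma K_neq_C5 k i : k \in K -> (k == f i) = false.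
Proof. by move=> kK; apply: contraTF kK => /eqP ->; apply: C5_notin_K. Qed.

Lemma C5_vertex_cases v : [\/ v \in K, exists i, v = f i | v \in C5_rest].
Proof.
case: (boolP (v \in K)) => vK; first exact: Or31.
case: (boolP (v \in codom f)) => [/codomP[i ->] | vf]; first by apply: Or32; exists i.
by apply: Or33; rewrite inE vK.
Qed.

Lemma C5_nbr i v : e (f i) v -> v \in K \/ exists2 j, v = f j & c5rel i j.
Proof.
case: (C5_vertex_cases v) => [vK | [j ->] | vrest]; first by left.
- by rewrite f_C5 => ij; right; exists j.
- by rewrite esym (negbTE (rest_anticomplete i vrest)).
Qed.

Definition C5_retract := f 0%R |: (f 1%R |: (f 4%R |: K)).

(* Vertices of the rest go to a non-neighbour in [K] if there is one; otherwise
   they are complete to [K], anticomplete to the cycle, and go to [f 0]. *)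
Definition C5_rho v :=
  if v \in K then v else
  if [pick i | f i == v] is Some i then f (c5_fold i)
  else odflt (f 0%R) [pick k in K | ~~ e v k].

Lemma C5_rho_K v : v \in K -> C5_rho v = v.
Proof. by rewrite /C5_rho => ->. Qed.

Lemma C5_rho_f i : C5_rho (f i) = f (c5_fold i).
Proof.
rewrite /C5_rho (negbTE (C5_notin_K i)); case: pickP => [j /eqP/finj -> // | none].
by move: (none i); rewrite eqxx.
Qed.

Lemma C5_rho_rest v : v \in C5_rest ->
  (C5_rho v \in K /\ ~~ e v (C5_rho v)) \/ C5_rho v = f 0%R.
Proof.
rewrite inE => /andP[vK vf]; rewrite /C5_rho (negbTE vK).
case: pickP => [i /eqP fi | _]; first by rewrite -fi codom_f in vf.
by case: pickP => [k /andP[kK nvk] | _]; [left | right].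
Qed.

Lemma C5_rho_in v : C5_rho v \in C5_retract.
Proof.
rewrite !inE; case: (C5_vertex_cases v) => [vK | [i ->] | vrest].
- by rewrite C5_rho_K // vK !orbT.
- by rewrite C5_rho_f !(inj_eq finj); elim/I5_ind: i; rewrite /c5_fold /= ?orbT.
- by case: (C5_rho_rest vrest) => [[-> _] | ->]; rewrite ?eqxx ?orbT.
Qed.

Lemma C5_rho_id : {in C5_retract, forall r, C5_rho r = r}.
Proof.
move=> r; rewrite !inE => /or4P[] => [/eqP-> | /eqP-> | /eqP-> | /C5_rho_K //];
  by rewrite C5_rho_f.
Qed.

Lemma C5_rho_indep u v : C5_rho u = C5_rho v -> ~~ e u v.
Proof.
have K_case x y : x \in K -> C5_rho x = C5_rho y -> ~~ e x y.
  move=> xK; rewrite C5_rho_K //; case: (C5_vertex_cases y) => [yK | [j ->] | yrest].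
  - by rewrite C5_rho_K // => ->; rewrite eirr.
  - by rewrite C5_rho_f => E; move: (C5_notin_K (c5_fold j)); rewrite -E xK.
  - case: (C5_rho_rest yrest) => [[_ nyx] | ->] E; first by rewrite esym E.
    by move: (C5_notin_K 0%R); rewrite -E xK.
case: (boolP (u \in K)) => [uK | uK]; first exact: K_case.
case: (boolP (v \in K)) => [vK E | vK]; first by rewrite esym K_case.
case: (C5_vertex_cases u) => [/(negP uK)[] | [i ->] | urest];
  case: (C5_vertex_cases v) => [/(negP vK)[] | [j ->] | vrest].
- by rewrite !C5_rho_f f_C5 => /finj; apply: c5_fold_indep.
- by rewrite esym rest_anticomplete.
- by rewrite rest_anticomplete.
- by move=> _; apply: rest_indep.
Qed.

Lemma C5_retract_lt : #|C5_retract| < l.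
Proof. by apply: leq_ltn_trans K_lt; rewrite !cardsU1; lia. Qed.

Lemma C5_rest_card : #|C5_rest| + 5 <= #|V|.
Proof.
have rest_sub : C5_rest \subset ~: [set f i | i in 'I_5].
  by apply/subsetP => v; rewrite !inE => /andP[_]; apply: contra => /imsetP[i _ ->]; apply: codom_f.
have := cardsC [set f i | i in 'I_5]; rewrite card_imset // card_ord.
by move/subset_leq_card: rest_sub; lia.
Qed.

Lemma recol_dist_le_C5_pair (a : {ffun V -> 'I_l}) i j col :
  proper_col e a -> ~~ c5rel i j -> (forall k, k \in K -> a k != col) ->
  (forall k, c5rel i k || c5rel j k -> a (f k) != col) ->
  recol_dist_le e a (recolour a [set f i; f j] col) 2.
Proof.
move=> pa nij K_ok C5_ok; apply: recol_dist_le_widen (_ : #|[set f i; f j]| <= 2) _.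
  by rewrite cards2; case: (_ != _).
apply: recol_dist_le_recolour => // [u v | u v].
  by rewrite !inE => /orP[] /eqP -> /orP[] /eqP ->; rewrite ?eirr // f_C5 // c5rel_sym.
rewrite !inE negb_or => /orP[] /eqP -> _ /C5_nbr [vK | [k -> ik]];
  by [apply: K_ok | apply: C5_ok; rewrite ik ?orbT].
Qed.

Definition C5_target (a : V -> 'I_l) x y v :=
  if v == f 0%R then x else if v == f 1%R then y else a v.

Lemma C5_target_K a x y : {in K, C5_target a x y =1 a}.
Proof. by move=> k kK; rewrite /C5_target !K_neq_C5. Qed.

Lemma C5_target_inj a x y : {in K &, injective a} ->
  x \notin a @: K -> y \notin a @: K -> a (f 4%R) \notin a @: K ->
  x != y -> x != a (f 4%R) -> y != a (f 4%R) -> {in C5_retract &, injective (C5_target a x y)}.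
Proof.
move=> aK xK yK a4K xy x4 y4; have im_K := eq_in_imset (@C5_target_K a x y).
apply: in_inj_setU1; [apply: in_inj_setU1; [apply: in_inj_setU1 |] |].
- by move=> u v uK vK; rewrite !C5_target_K //; apply: aK.
- by rewrite im_K /C5_target !(inj_eq finj).
- by rewrite imsetU1 im_K !inE /C5_target !(inj_eq finj) /= negb_or yK y4.
- by rewrite !imsetU1 im_K !inE /C5_target !(inj_eq finj) /= !negb_or xK x4 xy.
Qed.

Lemma C5_target_agree (a : {ffun V -> 'I_l}) x y :
  {in ~: C5_rest, recolour (recolour a [set f 0%R; f 2%R] x) [set f 1%R; f 3%R] y =1
                  retract_col C5_rho (C5_target a x y)}.
Proof.
move=> v; rewrite inE /retract_col => vrest.
case: (C5_vertex_cases v) => [vK | [i ->] | /(negP vrest)[]].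
  by rewrite !ffunE C5_rho_K // C5_target_K // !inE !K_neq_C5.
by rewrite !ffunE C5_rho_f; elim/I5_ind: i; rewrite ?ffunE !inE /C5_target !(inj_eq finj).
Qed.

(* After the two pair moves the cycle is coloured [x y x y (a (f 4))], which
   factors through [C5_rho]. *)
Lemma C5_to_retract (a : {ffun V -> 'I_l}) : proper_col e a ->
  exists2 c, {in C5_retract &, injective c} & recol_dist_le e a (retract_col C5_rho c) #|V|.
Proof.
move=> pa; have aK := proper_clique_inj pa K_clique.
have C5_fresh i : a (f i) \notin a @: K := C5_colour_notin_K i pa.
have [x] : exists x, x \notin a @: K :|: [set a (f 1%R); a (f 3%R); a (f 4%R)].
  apply/exists_fresh_colour/leq_ltn_trans/K_lt.
  by rewrite (leq_trans (leq_cardsU _ _)) // leq_add ?leq_imset_card ?cards3_le.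
rewrite !inE !negb_or => /and3P[xK /andP[x1 x3] x4].
have [y] : exists y, y \notin a @: K :|: [set x; a (f 4%R)].
  apply/exists_fresh_colour/leq_ltn_trans/K_lt.
  by rewrite (leq_trans (leq_cardsU _ _)) // cards2 leq_add ?leq_imset_card //; case: (_ != _).
rewrite !inE !negb_or => /and3P[yK yx y4].
pose a1 := recolour a [set f 0%R; f 2%R] x.
have a_a1 : recol_dist_le e a a1 2.
  apply: recol_dist_le_C5_pair => // [k kK | k].
    by apply: contraNneq xK => <-; apply: imset_f.
  by elim/I5_ind: k => //= _; rewrite eq_sym.
have a1_a2 : recol_dist_le e a1 (recolour a1 [set f 1%R; f 3%R] y) 2.
  apply: recol_dist_le_C5_pair => // [|k kK | k].
  - exact: recol_dist_le_properr a_a1.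
  - rewrite ffunE !inE !K_neq_C5 //=.
    by apply: contraNneq yK => <-; apply: imset_f.
  - by elim/I5_ind: k => //= _; rewrite ffunE !inE !(inj_eq finj) //= eq_sym.
have xy : x != y by rewrite eq_sym.
have cinj := C5_target_inj aK xK yK (C5_fresh 4%R) xy x4 y4.
exists (C5_target a x y) => //.
have a2_c := recol_dist_le_indep esym eirr (recol_dist_le_properr a1_a2)
  (proper_retract_col C5_rho_in C5_rho_indep cinj) rest_indep (C5_target_agree a x y).
apply: recol_dist_le_widen (recol_dist_le_trans (recol_dist_le_trans a_a1 a1_a2) a2_c).
by have := C5_rest_card; lia.
Qed.

Lemma C5_recol_diam : recol_diam_le e l (4 * #|V|).
Proof.
exact: (recol_diam_le_retraction esym eirr C5_rho_in C5_rho_id C5_rho_indep C5_retract_lt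
  C5_to_retract).
Qed.

End C5Blowup.

(** * Structure of (2K2, C4)-free graphs *)

Lemma I4_ind (P : 'I_4 -> Prop) : P 0%R -> P 1%R -> P 2%R -> P 3%R -> forall i, P i.
Proof.
move=> P0 P1 P2 P3 [[|[|[|[|m]]]] lt] //.
- by rewrite (_ : Ordinal lt = 0%R) //; apply: val_inj.
- by rewrite (_ : Ordinal lt = 1%R) //; apply: val_inj.
- by rewrite (_ : Ordinal lt = 2%R) //; apply: val_inj.
- by rewrite (_ : Ordinal lt = 3%R) //; apply: val_inj.
Qed.

Section InducedSubgraphs.
Variables (V : finType) (e : rel V).
Hypotheses (esym : symmetric e) (eirr : irreflexive e).

Lemma edge_neq x y : e x y -> x != y.
Proof. by apply: contraTneq => ->; rewrite eirr. Qed.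

Lemma neq_of_nbr x y z : e x z -> ~~ e y z -> x != y.
Proof. by move=> exz; apply: contraNneq => <-. Qed.

Lemma has_induced_nth n (h : rel 'I_n) (s : seq V) x0 : uniq s -> size s = n ->
  (forall i j : 'I_n, e (nth x0 s i) (nth x0 s j) = h i j) -> has_induced h e.
Proof.
move=> us sz hs; exists (fun i : 'I_n => nth x0 s i); split => // i j /eqP.
by rewrite nth_uniq ?sz // => /eqP/val_inj.
Qed.

Lemma has_induced_2K2 a b c d : e a b -> e c d ->
  ~~ e a c -> ~~ e a d -> ~~ e b c -> ~~ e b d -> has_induced two_K2 e.
Proof.
move=> ab cd ac ad bc bd; apply: (@has_induced_nth 4 _ [:: a; b; c; d] a) => //.
  have ba : e b a by rewrite esym.
  have [a_c a_d] : a != c /\ a != d by split; apply: (neq_of_nbr ab); rewrite esym.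
  have [b_c b_d] : b != c /\ b != d by split; apply: (neq_of_nbr ba); rewrite esym.
  by rewrite /= !inE !negb_or (edge_neq ab) (edge_neq cd) a_c a_d b_c b_d.
move=> i j; elim/I4_ind: i; elim/I4_ind: j;
  by rewrite /= ?eirr ?ab ?cd ?(negbTE ac) ?(negbTE ad) ?(negbTE bc) ?(negbTE bd) // esym
    ?ab ?cd ?(negbTE ac) ?(negbTE ad) ?(negbTE bc) ?(negbTE bd).
Qed.

Lemma has_induced_C4 a b c d : a != c -> b != d ->
  e a b -> e b c -> e c d -> e d a -> ~~ e a c -> ~~ e b d -> has_induced C4 e.
Proof.
move=> a_c b_d ab bc cd da ac bd; apply: (@has_induced_nth 4 _ [:: a; b; c; d] a) => //.
  rewrite /= !inE !negb_or a_c b_d (edge_neq ab) (edge_neq bc) (edge_neq cd) eq_sym.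
  by rewrite (edge_neq da).
move=> i j; elim/I4_ind: i; elim/I4_ind: j;
  by rewrite /= ?eirr ?ab ?bc ?cd ?da ?(negbTE ac) ?(negbTE bd) // esym
    ?ab ?bc ?cd ?da ?(negbTE ac) ?(negbTE bd).
Qed.

Lemma has_induced_C5 a b c d g : e a b -> e b c -> e c d -> e d g -> e g a ->
  ~~ e a c -> ~~ e a d -> ~~ e b d -> ~~ e b g -> ~~ e c g -> has_induced c5rel e.
Proof.
move=> ab bc cd dg ga ac ad bd bg cg.
apply: (@has_induced_nth 5 _ [:: a; b; c; d; g] a) => //.
  have a_c : a != c by rewrite eq_sym (neq_of_nbr cd).
  have a_d : a != d by rewrite (neq_of_nbr ab) // esym.
  have b_d : b != d by rewrite (neq_of_nbr (z := a)) // esym.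
  have b_g : b != g by rewrite (neq_of_nbr bc) // esym.
  have c_g : c != g by rewrite (neq_of_nbr (z := b)) // esym.
  rewrite /= !inE !negb_or a_c a_d b_d b_g c_g (edge_neq ab) (edge_neq bc) (edge_neq cd).
  by rewrite (edge_neq dg) eq_sym (edge_neq ga).
move=> i j; elim/I5_ind: i; elim/I5_ind: j;
  by rewrite /= ?eirr ?ab ?bc ?cd ?dg ?ga ?(negbTE ac) ?(negbTE ad) ?(negbTE bd) ?(negbTE bg)
    ?(negbTE cg) // esym ?ab ?bc ?cd ?dg ?ga ?(negbTE ac) ?(negbTE ad) ?(negbTE bd)
    ?(negbTE bg) ?(negbTE cg).
Qed.

End InducedSubgraphs.

Section Structure.
Variables (V : finType) (e : rel V).
Hypotheses (esym : symmetric e) (eirr : irreflexive e).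
Hypotheses (no2K2 : ~ has_induced two_K2 e) (noC4 : ~ has_induced C4 e).

Lemma C5_nbr_succ0 (f : 'I_5 -> V) u : injective f ->
  (forall i j, e (f i) (f j) = c5rel i j) -> u \notin codom f -> e u (f 0%R) -> e u (f 1%R).
Proof.
move=> finj f_C5 uf u0; apply/negPn/negP => nu1.
have u_ne i : u != f i by apply: contraNneq uf => ->; apply: codom_f.
have f_ne i j : i != j -> f i != f j by rewrite (inj_eq finj).
have [u2 | nu2] := boolP (e u (f 2%R)).
  apply: noC4.
  apply: (has_induced_C4 esym eirr (c := f 1%R) (d := f 2%R) (u_ne _) (f_ne 0%R 2%R _));
    by rewrite ?f_C5 // esym.
have [u3 | nu3] := boolP (e u (f 3%R)); last first.
  by apply: no2K2; apply: (has_induced_2K2 esym eirr (c := f 2%R) (d := f 3%R) u0); rewrite ?f_C5.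
have [u4 | nu4] := boolP (e u (f 4%R)).
  by apply: no2K2; apply: (has_induced_2K2 esym eirr (c := f 1%R) (d := f 2%R) u4); rewrite ?f_C5.
apply: noC4.
apply: (has_induced_C4 esym eirr (c := f 4%R) (d := f 0%R) (u_ne _) (f_ne 3%R 0%R _));
  by rewrite ?f_C5 // esym.
Qed.

Section C5Neighbours.
Variable f : 'I_5 -> V.
Hypotheses (finj : injective f) (f_C5 : forall i j, e (f i) (f j) = c5rel i j).

Lemma C5_nbr_succ u i : u \notin codom f -> e u (f i) -> e u (f (i + 1)%R).
Proof.
move=> uf ui; have rot_inj : injective (fun k => f (i + k)%R) by move=> x y /finj/addrI.
apply: (C5_nbr_succ0 rot_inj) => [x y | | ]; first by rewrite f_C5 c5rel_addl.
- by apply: contra uf => /codomP[k ->]; apply: codom_f.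
- by rewrite addr0.
Qed.

Lemma C5_nbr_all u i j : u \notin codom f -> e u (f i) -> e u (f j).
Proof.
move=> uf ui; have step n : e u (f (i + n%:R)%R).
  by elim: n => [|n IH]; rewrite ?addr0 // -natr1 addrA; apply: C5_nbr_succ.
by move: (step (j - i)%R); rewrite natr_Zp addrC subrK.
Qed.

Lemma C5_structure : exists K : {set V}, [/\ clique e K, forall k i, k \in K -> e k (f i),
  forall u i, u \in C5_rest K f -> ~~ e u (f i) & independent e (C5_rest K f)].
Proof.
pose K := [set v | [forall i, e v (f i)]].
have K_complete k i : k \in K -> e k (f i) by rewrite inE => /forallP.
have rest_anti u i : u \in C5_rest K f -> ~~ e u (f i).
  rewrite inE => /andP[uK uf]; apply: contra uK => ui; rewrite inE.
  by apply/forallP => j; apply: C5_nbr_all ui.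
exists K; split => //.
- move=> x y xK yK xy; apply/negPn/negP => nxy; apply: noC4.
  apply: (has_induced_C4 esym eirr (b := f 0%R) (d := f 2%R) xy);
    by rewrite ?(inj_eq finj) ?f_C5 ?K_complete // esym K_complete.
- move=> u v urest vrest; apply/negP => euv; apply: no2K2.
  by apply: (has_induced_2K2 esym eirr (c := f 0%R) (d := f 1%R) euv); rewrite ?f_C5 ?rest_anti.
Qed.

End C5Neighbours.

Definition outer_edges (K : {set V}) :=
  [set p : V * V | [&& p.1 \notin K, p.2 \notin K & e p.1 p.2]].

Lemma in_outer_edges K p : (p \in outer_edges K) = [&& p.1 \notin K, p.2 \notin K & e p.1 p.2].
Proof. by rewrite inE. Qed.

Lemma clique_setU1 x Q : clique e Q -> (forall y, y \in Q -> x != y -> e x y) ->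
  clique e (x |: Q).
Proof.
move=> Qcl xQ y z; rewrite !inE => /predU1P[-> | yQ] /predU1P[-> | zQ]; rewrite ?eqxx // => yz.
- exact: xQ.
- by rewrite esym xQ // eq_sym.
- exact: Qcl.
Qed.

Lemma clique_setD1 x Q : clique e Q -> clique e (Q :\ x).
Proof. by move=> Qcl y z /setD1P[_ yQ] /setD1P[_ zQ]; apply: Qcl. Qed.

Section MaximumClique.
Hypothesis noC5 : ~ has_induced c5rel e.
Variable K : {set V}.
Hypotheses (K_clique : clique e K) (K_max : forall Q, clique e Q -> #|Q| <= #|K|).

Lemma max_clique_nonnbr v : v \notin K -> exists2 k, k \in K & ~~ e v k.
Proof.
move=> vK; case: (pickP [pred k in K | ~~ e v k]) => [k /andP[kK nvk] | all_adj].
  by exists k.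
have : clique e (v |: K).
  by apply: clique_setU1 => // k kK _; move: (all_adj k); rewrite /= kK => /negbFE.
by move/K_max; rewrite cardsU1 vK ltnn.
Qed.

Section Swap.
Variables u v k k2 : V.
Hypotheses (uK : u \notin K) (vK : v \notin K) (uv : e u v) (kK : k \in K) (k2K : k2 \in K).
Hypotheses (k_k2 : k != k2) (nuk : ~~ e u k) (nvk : ~~ e v k) (nvk2 : ~~ e v k2).
Hypothesis u_adj : forall x, x \in K -> x != k -> e u x.

Local Notation K' := (u |: (K :\ k)).

Lemma swap_nbr w : w \notin K -> e k w -> e u w.
Proof.
move=> wK kw; apply/negPn/negP => nuw.
have u_w : u != w by apply: contraNneq nuk => ->; rewrite esym.
have uk2 : e u k2 by apply: u_adj; rewrite // eq_sym.
have [vw | nvw] := boolP (e v w); last first.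
  by apply: no2K2; apply: (has_induced_2K2 esym eirr uv kw); rewrite // esym.
have [wk2 | nwk2] := boolP (e w k2).
  apply: noC4; apply: (has_induced_C4 esym eirr u_w _ uv vw wk2) => //; last by rewrite esym.
  by apply: contraNneq vK => ->.
apply: noC5; apply: (has_induced_C5 esym eirr uv vw _ (K_clique kK k2K k_k2)) => //;
  by rewrite esym.
Qed.

Lemma swap_clique : clique e K'.
Proof.
by apply: clique_setU1 (clique_setD1 (x := k) K_clique) _ => x /setD1P[xk xK] _; apply: u_adj.
Qed.

Lemma card_swap : #|K'| = #|K|.
Proof. by rewrite cardsU1 !inE (negbTE uK) andbF (cardsD1 k K) kK. Qed.

Definition swap_vertex x := if x == k then u else x.

Lemma notin_swap x : (x \notin K') = (x != u) && ((x == k) || (x \notin K)).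
Proof. by rewrite !inE negb_or negb_and negbK; case: eqP. Qed.

Lemma swap_vertex_out x : x \notin K' -> swap_vertex x \notin K.
Proof. by rewrite notin_swap /swap_vertex => /andP[_]; case: eqP. Qed.

Lemma swap_vertex_inj x y : x \notin K' -> y \notin K' ->
  swap_vertex x = swap_vertex y -> x = y.
Proof.
rewrite !notin_swap /swap_vertex => /andP[xu _] /andP[yu _].
case: eqP => [-> | _]; case: eqP => [-> | _] // E.
- by rewrite E eqxx in yu.
- by rewrite -E eqxx in xu.
Qed.

Lemma swap_vertex_edge x y : x \notin K' -> y \notin K' -> e x y ->
  e (swap_vertex x) (swap_vertex y).
Proof.
rewrite !notin_swap /swap_vertex => /andP[_ xK] /andP[_ yK].
case: eqP => [-> | /eqP xk]; case: eqP => [-> | /eqP yk]; rewrite ?eirr // => xy.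
- by move: yK; rewrite (negbTE yk) => yK; apply: swap_nbr.
- by move: xK; rewrite (negbTE xk) => xK; rewrite esym; apply: swap_nbr; rewrite // esym.
Qed.

(* [swap_vertex] maps the outer edges of [K'] injectively to outer edges of [K],
   and misses [(u, v)]. *)
Lemma swap_outer_edges : #|outer_edges K'| < #|outer_edges K|.
Proof.
pose phi p := (swap_vertex p.1, swap_vertex p.2).
have phi_inj : {in outer_edges K' &, injective phi}.
  move=> [x1 x2] [y1 y2]; rewrite !in_outer_edges /= => /and3P[x1K x2K _] /and3P[y1K y2K _] [E1 E2].
  by rewrite (swap_vertex_inj x1K y1K E1) (swap_vertex_inj x2K y2K E2).
rewrite -(card_in_imset phi_inj); apply/proper_card/properP; split.
  apply/subsetP => _ /imsetP[[x y] /[!in_outer_edges] /= /and3P[xK yK xy] ->].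
  by rewrite /= !swap_vertex_out // swap_vertex_edge.
exists (u, v); first by rewrite in_outer_edges /= uK vK uv.
apply/imsetP => -[[x y] /[!in_outer_edges] /= /and3P[xK yK xy] [ux vy]].
have x_k : x = k.
  move: ux; rewrite /swap_vertex; case: eqP => // _ xu.
  by move: xK; rewrite notin_swap xu eqxx.
have y_v : y = v.
  by move: vy; rewrite /swap_vertex; case: eqP => // _ vu; move: uv; rewrite -vu eirr.
by rewrite x_k y_v esym (negbTE nvk) in xy.
Qed.

End Swap.

Lemma nested_nonnbr_improve u v : u \notin K -> v \notin K -> e u v ->
  [set k in K | ~~ e u k] \subset [set k in K | ~~ e v k] ->
  exists2 K', clique e K' /\ #|K'| = #|K| & #|outer_edges K'| < #|outer_edges K|.
Proof.
move=> uK vK uv /subsetP nested.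
have nv x : x \in K -> ~~ e u x -> ~~ e v x.
  by move=> xK ux; move: (nested x); rewrite !inE xK ux => /(_ isT).
have [k kK nuk] := max_clique_nonnbr uK.
have u_adj x : x \in K -> x != k -> e u x.
  move=> xK xk; apply/negPn/negP => nux; apply: no2K2.
  by apply: (has_induced_2K2 esym eirr uv (K_clique kK xK _)); rewrite 1?eq_sym ?nv.
case: (pickP [pred k2 in K | (k2 != k) && ~~ e v k2]) => [k2 /and3P[k2K k2k nvk2] | v_adj].
  have k_k2 : k != k2 by rewrite eq_sym.
  exists (u |: (K :\ k)); first by split; [apply: swap_clique | apply: card_swap].
  exact: (swap_outer_edges uK vK uv kK k2K k_k2 nuk (nv k kK nuk) nvk2 u_adj).
have Q_clique : clique e (u |: (v |: (K :\ k))).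
  apply: clique_setU1; last first.
    by move=> x /setU1P[-> _ | /setD1P[xk xK] _]; [exact: uv | exact: u_adj].
  apply: clique_setU1 (clique_setD1 (x := k) K_clique) _ => x /setD1P[xk xK] _.
  by move: (v_adj x); rewrite /= xk xK /= => /negbFE.
have := K_max Q_clique; rewrite !cardsU1 !inE (negbTE (edge_neq eirr uv)) (negbTE uK).
by rewrite (negbTE vK) !andbF (cardsD1 k K) kK /= => Q_le; exfalso; lia.
Qed.

(* The non-neighbourhoods in [K] of the ends of an outer edge are nested, or
   two private non-neighbours would close an induced C4. *)
Lemma max_clique_improve u v : u \notin K -> v \notin K -> e u v ->
  exists2 K', clique e K' /\ #|K'| = #|K| & #|outer_edges K'| < #|outer_edges K|.
Proof.
move=> uK vK uv.
have [/nested_nonnbr_improve | /subsetPn[k1]] := boolP ([set k in K | ~~ e u k] \subset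
    [set k in K | ~~ e v k]); first exact.
rewrite !inE => /andP[k1K nuk1]; rewrite k1K negbK => vk1.
have [/nested_nonnbr_improve | /subsetPn[k2]] := boolP ([set k in K | ~~ e v k] \subset
    [set k in K | ~~ e u k]); first by apply; rewrite // esym.
rewrite !inE => /andP[k2K nvk2]; rewrite k2K negbK => uk2.
exfalso; apply: noC4.
apply: (has_induced_C4 esym eirr (a := u) (b := k2) (c := k1) (d := v)) => //;
  try by rewrite esym.
- by apply: contraNneq uK => ->.
- by apply: contraNneq vK => <-.
- by apply: K_clique => //; apply: contraNneq nvk2 => ->.
Qed.

End MaximumClique.

Lemma exists_maximum_clique :
  exists2 K, clique e K & forall Q, clique e Q -> #|Q| <= #|K|.
Proof.
have set0_clique : cliqueb e set0 by apply/cliqueP => x y; rewrite inE.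
case: (arg_maxnP (fun K : {set V} => #|K|) set0_clique) => K /cliqueP K_clique K_max.
by exists K => // Q /cliqueP /K_max.
Qed.

Lemma split_structure : ~ has_induced c5rel e -> exists K : {set V},
  [/\ clique e K, independent e (~: K) & forall v, v \notin K -> exists2 k, k \in K & ~~ e v k].
Proof.
move=> noC5.
have [K0 K0_clique K0_max] := exists_maximum_clique.
have [n] := ubnP #|outer_edges K0|.
elim: n K0 K0_clique K0_max => [|n IH] K K_clique K_max lt_n //.
have [no_outer | [[u v]]] := set_0Vmem (outer_edges K); last first.
  rewrite in_outer_edges => /and3P[uK vK uv].
  have [K' [K'_clique K'_card] fewer] := max_clique_improve noC5 K_clique K_max uK vK uv.
  by apply: (IH K' K'_clique) => [Q /K_max | ]; [rewrite K'_card | lia].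
exists K; split => // [u v uK vK | v]; last exact: max_clique_nonnbr.
apply/negP => uv; have : (u, v) \in outer_edges K by rewrite in_outer_edges -!in_setC uK vK.
by rewrite no_outer inE.
Qed.

End Structure.

(** * Chromatic bounds and the main theorem *)

Section ColourBounds.
Variables (V : finType) (e : rel V) (k : nat) (g : {ffun V -> 'I_k}).
Hypothesis pg : proper_col e g.

Lemma clique_card_le K : clique e K -> #|K| <= k.
Proof.
move=> K_clique; rewrite -(card_in_imset (proper_clique_inj pg K_clique)).
by apply: leq_trans (max_card _) _; rewrite card_ord.
Qed.

(* An odd cycle needs three colours, all unused on the clique complete to it. *)
Lemma C5_blowup_card_le K (f : 'I_5 -> V) : (forall i j, e (f i) (f j) = c5rel i j) ->
  clique e K -> (forall x i, x \in K -> e x (f i)) -> #|K| + 3 <= k.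
Proof.
move=> f_C5 K_clique K_complete.
have col_ne i j : c5rel i j -> g (f i) != g (f j) by rewrite -f_C5; apply: proper_col_neq.
have [i [j [m [ij im jm]]]] : exists i j m,
    [/\ g (f i) != g (f j), g (f i) != g (f m) & g (f j) != g (f m)].
  have [E | ne] := eqVneq (g (f 1%R)) (g (f 4%R)).
    by exists 2%R, 3%R, 4%R; split; [| rewrite -E |]; apply: col_ne.
  by exists 0%R, 1%R, 4%R; split => //; apply: col_ne.
have fresh x : g (f x) \notin g @: K := C5_colour_notin_K K_complete x pg.
have := max_card (mem (g (f i) |: (g (f j) |: (g (f m) |: g @: K)))).
rewrite card_ord !cardsU1 !inE (negbTE ij) (negbTE im) (negbTE jm) !fresh.
by rewrite (card_in_imset (proper_clique_inj pg K_clique)) /=; lia.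
Qed.

End ColourBounds.

Theorem theorem7 (V : finType) (e : rel V) (chi l : nat) :
  simple_graph e ->
  ~ has_induced two_K2 e ->
  ~ has_induced C4 e ->
  is_chromatic_number e chi ->
  chi + 1 <= l ->
  recol_connected e l /\ recol_diam_le e l (4 * #|V|).
Proof.
move=> [esym eirr] no2K2 noC4 [[g pg] _] chi_l.
suff diam : recol_diam_le e l (4 * #|V|) by split=> //; apply: recol_diam_le_connected diam.
have [[f [finj f_C5]] | noC5] := classic (has_induced c5rel e).
  have [K [K_clique K_complete rest_anti rest_indep]] :=
    C5_structure esym eirr no2K2 noC4 finj f_C5.
  apply: (C5_recol_diam esym eirr finj f_C5 K_clique K_complete rest_anti rest_indep).
  by have := C5_blowup_card_le pg f_C5 K_clique K_complete; lia.
have [K [K_clique out_indep out_nonnbr]] := split_structure esym eirr no2K2 noC4 noC5.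
apply: (split_recol_diam esym eirr K_clique out_indep out_nonnbr).
by have := clique_card_le pg K_clique; lia.
Qed.
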